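(* In the setting of the context, let $v\in J^k_o(X)$, choose $h\in\hat J^k(X)$ with $\delta_2(h)=v$, and write $h|_A=i_2(\{\gamma_A\})$, $h|_B=i_2(\{\gamma_B\})$ with $\gamma_A\in\mathbf\Lambda^{k-1}(A)$, $\gamma_B\in\mathbf\Lambda^{k-1}(B)$ (possible since $\delta_2(h|_A)=0=\delta_2(h|_B)$). Then $\gamma_A|_D-\gamma_B|_D\in\mathbf\Lambda^{k-1}_J(D)$, and its class $\Omega(v)$ in $Q_D:=\mathbf\Lambda^{k-1}_J(D)/(\mathbf\Lambda^{k-1}_J(A)|_D+\mathbf\Lambda^{k-1}_J(B)|_D)$ is independent of the choices of $h$ and of the representatives $\gamma_A,\gamma_B$. The resulting map $\Omega:J^k_o(X)\to Q_D$ is a group homomorphism.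
   Context: Let $J^*$ be a $\mathbb{Z}$-graded generalized cohomology theory on smooth manifolds (with corners) such that $J^k(\mathrm{pt})$ is finitely generated for every $k$; write $J^k(M;\mathbb{Z})=J^k(M)$, and $J^k(M;\mathbb{R})$, $J^k(M;\mathbb{R}/\mathbb{Z})$ for the associated theories with real and $\mathbb{R}/\mathbb{Z}$ coefficients. For $F=\mathbb{Q},\mathbb{R}$ set $\mathbf H^k(M;F)=\bigoplus_{j\ge0}H^j(M;J^{k-j}(\mathrm{pt})\otimes F)$, and $\mathbf\Lambda^k(M)=\bigoplus_{j\ge0}\Omega^j(M;J^{k-j}(\mathrm{pt})\otimes\mathbb{R})$ (smooth forms), with exterior derivative $d$. Let $ch:J^k(M;\mathbb{Z})\to\mathbf H^k(M;\mathbb{Q})$ be the canonical (Chern character) map, $i_\mathbb{R}:\mathbf H^k(M;\mathbb{Q})\to\mathbf H^k(M;\mathbb{R})$ the coefficient map, and $\mathbf\Lambda^k_J(M)$ the closed forms in $\mathbf\Lambda^k(M)$ whose de Rham class lies in $i_\mathbb{R}(ch(J^k(M;\mathbb{Z})))$. Let $p:\mathbf H^{k-1}(M;\mathbb{R})\to J^{k-1}(M;\mathbb{R}/\mathbb{Z})$ be induced by $\mathbb{R}\to\mathbb{R}/\mathbb{Z}$ and $b$ the Bockstein. $\hat J^k$ is a differential cohomology functor associated to $J$: a functor from smooth manifolds with corners to abelian groups with natural transformations $i_1:J^{k-1}(\cdot;\mathbb{R}/\mathbb{Z})\to\hat J^k$, $i_2:\mathbf\Lambda^{k-1}/\mathbf\Lambda^{k-1}_J\to\hat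 J^k$, $\delta_1:\hat J^k\to\mathbf\Lambda^k_J$, $\delta_2:\hat J^k\to J^k(\cdot;\mathbb{Z})$ such that $0\to J^{k-1}(\mathbb{R}/\mathbb{Z})\xrightarrow{i_1}\hat J^k\xrightarrow{\delta_1}\mathbf\Lambda^k_J\to0$ and $0\to\mathbf\Lambda^{k-1}/\mathbf\Lambda^{k-1}_J\xrightarrow{i_2}\hat J^k\xrightarrow{\delta_2}J^k(\mathbb{Z})\to0$ are exact, $\delta_2 i_1=b$, $\delta_1 i_2=d$, $i_1\circ p=i_2\circ\mathrm{deRh}$ (deRh sending a real class to the class of a closed representative), and $\mathrm{deRh}\circ\delta_1=i_\mathbb{R}\circ ch\circ\delta_2$ (deRh sending a closed form to its class). Geometric setting: $X$ is a compact smooth manifold, $X=A\cup B$ with $A,B$ compact codimension-$0$ submanifolds, $D=A\cap B$ a codimension-$0$ submanifold with collar neighborhoods in both $A$ and $B$. $J^k_o(X)=\{v\in J^k(X;\mathbb{Z}): v|_A=0=v|_B\}$. For a form $\alpha$, $\{\alpha\}$ denotes its class modulo $\mathbf\Lambda^{k-1}_J$. *)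

(* Abstract (axiomatized) rendering of the Mayer-Vietoris
   diagram D ⊂ A, B ⊂ X for a differential cohomology functor. *)
From HB Require Import structures.
From mathcomp Require Import all_boot all_order all_algebra.
Set Implicit Arguments. Unset Strict Implicit. Unset Printing Implicit Defensive.
Import GRing.Theory.
Local Open Scope ring_scope.

Definition additive_fun (U V : zmodType) (f : U -> V) : Prop :=
  forall x y, f (x - y) = f x - f y.

Definition subgroup_pred (U : zmodType) (P : U -> Prop) : Prop :=
  P 0 /\ forall x y, P x -> P y -> P (x - y).

(* Restriction of the data of the context to the four manifolds X, A, B, D:
   L_ = Λ^{k-1}(·) (smooth forms), LJ_ = Λ^{k-1}_J(·) ⊂ L_,
   H_ = \hat J^k(·), J_ = J^k(·;Z); r..  = restriction maps,
   i2_ : Λ^{k-1} -> \hat J^k  (i2 composed with the projection onto Λ/Λ_J),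
   d2_ : \hat J^k -> J^k(·;Z). *)
Record MVDiffData := {
  LX : zmodType; LA : zmodType; LB : zmodType; LD : zmodType;
  HX : zmodType; HA : zmodType; HB : zmodType; HD : zmodType;
  JX : zmodType; JA : zmodType; JB : zmodType; JD : zmodType;
  LJX : LX -> Prop; LJA : LA -> Prop; LJB : LB -> Prop; LJD : LD -> Prop;
  rLXA : LX -> LA; rLXB : LX -> LB; rLAD : LA -> LD; rLBD : LB -> LD;
  rHXA : HX -> HA; rHXB : HX -> HB; rHAD : HA -> HD; rHBD : HB -> HD;
  rJXA : JX -> JA; rJXB : JX -> JB; rJAD : JA -> JD; rJBD : JB -> JD;
  i2X : LX -> HX; i2A : LA -> HA; i2B : LB -> HB; i2D : LD -> HD;
  d2X : HX -> JX; d2A : HA -> JA; d2B : HB -> JB; d2D : HD -> JD;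
  add_rLXA : additive_fun rLXA; add_rLXB : additive_fun rLXB;
  add_rLAD : additive_fun rLAD; add_rLBD : additive_fun rLBD;
  add_rHXA : additive_fun rHXA; add_rHXB : additive_fun rHXB;
  add_rHAD : additive_fun rHAD; add_rHBD : additive_fun rHBD;
  add_rJXA : additive_fun rJXA; add_rJXB : additive_fun rJXB;
  add_rJAD : additive_fun rJAD; add_rJBD : additive_fun rJBD;
  add_i2X : additive_fun i2X; add_i2A : additive_fun i2A;
  add_i2B : additive_fun i2B; add_i2D : additive_fun i2D;
  add_d2X : additive_fun d2X; add_d2A : additive_fun d2A;
  add_d2B : additive_fun d2B; add_d2D : additive_fun d2D;
  comp_L : forall a, rLAD (rLXA a) = rLBD (rLXB a);
  comp_H : forall h, rHAD (rHXA h) = rHBD (rHXB h);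
  comp_J : forall v, rJAD (rJXA v) = rJBD (rJXB v);
  (* Λ_J is a subgroup, preserved by restriction (naturality of ch, deRh) *)
  sub_LJX : subgroup_pred LJX; sub_LJA : subgroup_pred LJA;
  sub_LJB : subgroup_pred LJB; sub_LJD : subgroup_pred LJD;
  res_LJXA : forall a, LJX a -> LJA (rLXA a);
  res_LJXB : forall a, LJX a -> LJB (rLXB a);
  res_LJAD : forall a, LJA a -> LJD (rLAD a);
  res_LJBD : forall a, LJB a -> LJD (rLBD a);
  (* i2 is injective on Λ^{k-1}/Λ^{k-1}_J: its kernel on forms is Λ_J *)
  ker_i2X : forall a, i2X a = 0 <-> LJX a;
  ker_i2A : forall a, i2A a = 0 <-> LJA a;
  ker_i2B : forall a, i2B a = 0 <-> LJB a;
  ker_i2D : forall a, i2D a = 0 <-> LJD a;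
  ex_X : forall h, d2X h = 0 <-> exists a, h = i2X a;
  ex_A : forall h, d2A h = 0 <-> exists a, h = i2A a;
  ex_B : forall h, d2B h = 0 <-> exists a, h = i2B a;
  ex_D : forall h, d2D h = 0 <-> exists a, h = i2D a;
  surj_X : forall v, exists h, d2X h = v;
  surj_A : forall v, exists h, d2A h = v;
  surj_B : forall v, exists h, d2B h = v;
  surj_D : forall v, exists h, d2D h = v;
  nat_i2XA : forall a, rHXA (i2X a) = i2A (rLXA a);
  nat_i2XB : forall a, rHXB (i2X a) = i2B (rLXB a);
  nat_i2AD : forall a, rHAD (i2A a) = i2D (rLAD a);
  nat_i2BD : forall a, rHBD (i2B a) = i2D (rLBD a);
  nat_d2XA : forall h, rJXA (d2X h) = d2A (rHXA h);
  nat_d2XB : forall h, rJXB (d2X h) = d2B (rHXB h);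
  nat_d2AD : forall h, rJAD (d2A h) = d2D (rHAD h);
  nat_d2BD : forall h, rJBD (d2B h) = d2D (rHBD h)
}.

Definition Jo (M : MVDiffData) (v : JX M) : Prop :=
  rJXA v = 0 /\ rJXB v = 0.

(* The subgroup Λ_J(A)|_D + Λ_J(B)|_D of Λ^{k-1}(D); Q_D = LJD / W. *)
Definition Wsub (M : MVDiffData) (x : LD M) : Prop :=
  exists a b, LJA a /\ LJB b /\ x = rLAD a + rLBD b.

(* Two lifts of v to \hat J^k(X) differ by i2 of a global form a, so their
   restricted representatives differ on A and on B by a|_A and a|_B modulo
   Λ_J; the differences on D then agree modulo Λ_J(A)|_D + Λ_J(B)|_D, because
   a|_A and a|_B have the same restriction to D.  Closedness follows from
   i2(γ_A|_D - γ_B|_D) = h|_D - h|_D = 0, and additivity from lifting v + w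
   by the sum of the lifts of v and w. *)
From mathcomp Require Import all_boot all_order all_algebra.
From Stdlib Require Import ClassicalEpsilon.
Set Implicit Arguments. Unset Strict Implicit. Unset Printing Implicit Defensive.
Import GRing.Theory.
Local Open Scope ring_scope.

Section AdditiveFun.
Variables (U V : zmodType) (f : U -> V).
Hypothesis f_additive : additive_fun f.

Lemma additive_fun0 : f 0 = 0.
Proof. by rewrite -(subrr 0) f_additive subrr. Qed.

Lemma additive_funN x : f (- x) = - f x.
Proof. by rewrite -sub0r f_additive additive_fun0 sub0r. Qed.

Lemma additive_funD x y : f (x + y) = f x + f y.
Proof. by have := f_additive x (- y); rewrite additive_funN !opprK. Qed.

End AdditiveFun.

Section SubgroupPred.
Variables (U : zmodType) (P : U -> Prop).
Hypothesis P_subgroup : subgroup_pred P.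

Lemma subgroup_predN x : P x -> P (- x).
Proof. by rewrite -sub0r; apply: (proj2 P_subgroup); apply: (proj1 P_subgroup). Qed.

End SubgroupPred.

Section MayerVietoris.
Variable M : MVDiffData.

Definition mv_gap (gA : LA M) (gB : LB M) : LD M := rLAD gA - rLBD gB.

Definition i2_reps (h : HX M) (gA : LA M) (gB : LB M) : Prop :=
  rHXA h = i2A gA /\ rHXB h = i2B gB.

Lemma Jo_add (v w : JX M) : Jo v -> Jo w -> Jo (v + w).
Proof.
case=> vA vB [wA wB]; split.
  by rewrite (additive_funD (@add_rJXA M)) vA wA addr0.
by rewrite (additive_funD (@add_rJXB M)) vB wB addr0.
Qed.

Lemma Wsub_opp (x : LD M) : Wsub x -> Wsub (- x).
Proof.
case=> a [b [LJa [LJb ->]]]; exists (- a), (- b).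
split; first exact: subgroup_predN (@sub_LJA M) _ LJa.
split; first exact: subgroup_predN (@sub_LJB M) _ LJb.
by rewrite (additive_funN (@add_rLAD M)) (additive_funN (@add_rLBD M)) opprD.
Qed.

Lemma mv_gapD gA gA' gB gB' :
  mv_gap (gA + gA') (gB + gB') = mv_gap gA gB + mv_gap gA' gB'.
Proof.
by rewrite /mv_gap (additive_funD (@add_rLAD M)) (additive_funD (@add_rLBD M))
  opprD addrACA.
Qed.

Lemma mv_gapB gA gA' gB gB' :
  mv_gap (gA - gA') (gB - gB') = mv_gap gA gB - mv_gap gA' gB'.
Proof. by apply/eqP; rewrite eq_sym subr_eq -mv_gapD !subrK. Qed.

Lemma mv_gap_res (a : LX M) : mv_gap (rLXA a) (rLXB a) = 0.
Proof. by rewrite /mv_gap comp_L subrr. Qed.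

Lemma Wsub_mv_gap gA gB : LJA gA -> LJB gB -> Wsub (mv_gap gA gB).
Proof.
move=> LJgA LJgB; exists gA, (- gB); split=> //; split.
  exact: subgroup_predN (@sub_LJB M) _ LJgB.
by rewrite (additive_funN (@add_rLBD M)).
Qed.

Lemma i2_repsD h h' gA gA' gB gB' :
  i2_reps h gA gB -> i2_reps h' gA' gB' -> i2_reps (h + h') (gA + gA') (gB + gB').
Proof.
case=> hA hB [h'A h'B]; split.
  by rewrite (additive_funD (@add_rHXA M)) (additive_funD (@add_i2A M)) hA h'A.
by rewrite (additive_funD (@add_rHXB M)) (additive_funD (@add_i2B M)) hB h'B.
Qed.

Lemma i2_repsB h h' gA gA' gB gB' :
  i2_reps h gA gB -> i2_reps h' gA' gB' -> i2_reps (h - h') (gA - gA') (gB - gB').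
Proof.
case=> hA hB [h'A h'B]; split.
  by rewrite (@add_rHXA M) (@add_i2A M) hA h'A.
by rewrite (@add_rHXB M) (@add_i2B M) hB h'B.
Qed.

Lemma i2_reps_exists (h : HX M) : Jo (d2X h) -> exists gA gB, i2_reps h gA gB.
Proof.
case=> vA vB.
have /(@ex_A M) [gA EA] : d2A (rHXA h) = 0 by rewrite -nat_d2XA.
have /(@ex_B M) [gB EB] : d2B (rHXB h) = 0 by rewrite -nat_d2XB.
by exists gA, gB.
Qed.

Lemma LJD_mv_gap h gA gB : i2_reps h gA gB -> LJD (mv_gap gA gB).
Proof.
case=> hA hB; apply/(@ker_i2D M).
by rewrite (@add_i2D M) -nat_i2AD -nat_i2BD -hA -hB comp_H subrr.
Qed.

Lemma Wsub_mv_gap_i2X a gA gB : i2_reps (i2X a) gA gB -> Wsub (mv_gap gA gB).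
Proof.
case=> aA aB.
have /(@ker_i2A M) LJA_gA : i2A (gA - rLXA a) = 0.
  by rewrite (@add_i2A M) -aA nat_i2XA subrr.
have /(@ker_i2B M) LJB_gB : i2B (gB - rLXB a) = 0.
  by rewrite (@add_i2B M) -aB nat_i2XB subrr.
rewrite -[gA](subrK (rLXA a)) -[gB](subrK (rLXB a)) mv_gapD mv_gap_res addr0.
exact: Wsub_mv_gap.
Qed.

Lemma Wsub_mv_gap_lifts h h' gA gA' gB gB' :
  d2X h = d2X h' -> i2_reps h gA gB -> i2_reps h' gA' gB' ->
  Wsub (mv_gap gA gB - mv_gap gA' gB').
Proof.
move=> Eh reps reps'.
have /(@ex_X M) [a Ea] : d2X (h - h') = 0 by rewrite (@add_d2X M) Eh subrr.
rewrite -mv_gapB; apply: (@Wsub_mv_gap_i2X a).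
by rewrite -Ea; apply: i2_repsB.
Qed.

Definition Omega_rep (v : JX M) (x : LD M) : Prop :=
  exists h gA gB, d2X h = v /\ i2_reps h gA gB /\ x = mv_gap gA gB.

Lemma Omega_rep_choice :
  exists Om : JX M -> LD M, forall v, Jo v -> Omega_rep v (Om v).
Proof.
apply: (choice (fun v x => Jo v -> Omega_rep v x)) => v.
case: (excluded_middle_informative (Jo v)) => [Jv|nJv]; last by exists 0.
have [h Eh] := surj_X v.
have [gA [gB reps]] : exists gA gB, i2_reps h gA gB by apply: i2_reps_exists; rewrite Eh.
by exists (mv_gap gA gB) => _; exists h, gA, gB.
Qed.

End MayerVietoris.

Theorem mainTheorem2 (M : MVDiffData) :
  exists Om : JX M -> LD M,
    (forall v, Jo v -> LJD (Om v)) /\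
    (forall v (h : HX M) (gA : LA M) (gB : LB M),
        Jo v -> d2X h = v -> rHXA h = i2A gA -> rHXB h = i2B gB ->
        LJD (rLAD gA - rLBD gB) /\ Wsub (rLAD gA - rLBD gB - Om v)) /\
    (forall v w, Jo v -> Jo w -> Wsub (Om (v + w) - Om v - Om w)).
Proof.
have [Om OmP] := Omega_rep_choice M.
have Om_class v h gA gB : Jo v -> d2X h = v -> i2_reps h gA gB ->
    Wsub (mv_gap gA gB - Om v).
  move=> Jv Eh reps; have [h' [gA' [gB' [Eh' [reps' ->]]]]] := OmP v Jv.
  by apply: Wsub_mv_gap_lifts reps reps'; rewrite Eh Eh'.
exists Om; split.
  by move=> v /OmP [h [gA [gB [_ [reps ->]]]]]; apply: LJD_mv_gap reps.
split=> [v h gA gB Jv Eh hA hB|v w Jv Jw].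
  have reps : i2_reps h gA gB by split.
  by split; [apply: LJD_mv_gap reps | apply: Om_class reps].
have [h [gA [gB [Eh [reps ->]]]]] := OmP v Jv.
have [h' [gA' [gB' [Eh' [reps' ->]]]]] := OmP w Jw.
have := Om_class _ _ _ _ (Jo_add Jv Jw) _ (i2_repsD reps reps').
rewrite (additive_funD (@add_d2X M)) Eh Eh' mv_gapD => /(_ erefl) /Wsub_opp.
by rewrite opprB opprD addrA.
Qed.
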